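(* Let $A=\mathrm{diag}([-1],G_1,\dots,G_m,[1])\in\mathbb{R}^{n\times n}$, $m\geq 1$, where each of the $1\times1$ blocks $[-1]$ and $[1]$ may or may not be present, with $G_j=\begin{bmatrix}c_j&s_j\\-s_j&c_j\end{bmatrix}$, $c_j^2+s_j^2=1$, $s_j\neq 0$, and $-1=c_0<c_1<c_2<\cdots<c_m<1=c_{m+1}$. Let $v_0\in\mathbb{R}^n$ be a unit norm vector with $d(A,v_0)\geq 2$. Suppose that $v_0^{(\ell)}\neq 0$ for some $\ell$ with $1\leq\ell\leq m$, and that $v_0^{(j)}\neq 0$ for some block index $j$ with $0\leq j\leq m+1$ (for a block that is present) such that $c_\ell c_j\leq 0$. Then for the iteration ACI($1$) below, $\alpha_k\to 0$ and $\beta_k\to 0$ as $k\to\infty$.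
   Context: Block partitioning: every $v\in\mathbb{R}^n$ is written as $v=[v^{(0)};v^{(1)};\dots;v^{(m)};v^{(m+1)}]$ with $v^{(0)}\in\mathbb{R}$ (present only if the block $[-1]$ is present), $v^{(j)}\in\mathbb{R}^2$ for $j=1,\dots,m$ (conforming with the blocks $G_j$), and $v^{(m+1)}\in\mathbb{R}$ (present only if the block $[1]$ is present). ACI($1$): for $k=0,1,2,\dots$: $\widetilde w_k=(A-\alpha_kI)v_k$ with $\alpha_k=v_k^TAv_k$; $w_k=\widetilde w_k/\|\widetilde w_k\|$; $\widetilde v_{k+1}=(A^T-\beta_kI)w_k$ with $\beta_k=w_k^TAw_k$; $v_{k+1}=\widetilde v_{k+1}/\|\widetilde v_{k+1}\|$. $d(A,v)$ is the grade of $v$ w.r.t. $A$ (degree of the monic polynomial $p$ of smallest degree with $p(A)v=0$); $\|\cdot\|$ is the Euclidean norm. *)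

From HB Require Import structures.
From mathcomp Require Import all_boot all_order all_algebra.
From mathcomp Require Import all_classical all_reals all_analysis.
Set Implicit Arguments. Unset Strict Implicit. Unset Printing Implicit Defensive.
Import Order.TTheory GRing.Theory Num.Theory.
Local Open Scope ring_scope.

(* Dimension n = p + 2m + q, where p (resp. q) says whether the 1x1 block
   [-1] (resp. [1]) is present. *)
Definition dimA (p : bool) (m : nat) (q : bool) : nat := (p + 2 * m + q)%N.

(* Block index of coordinate i (0-based): 0 for the [-1] block,
   j in 1..m for the block G_j, m+1 for the [1] block. *)
Definition blk (p : bool) (m : nat) (i : nat) : nat :=
  if p && (i == 0)%N then 0%N
  else if (i - p < 2 * m)%N then ((i - p) %/ 2).+1 else m.+1.

Definition pos2 (p : bool) (i : nat) : nat := ((i - p) %% 2)%N.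

Definition cext {R : nzRingType} (m : nat) (c : nat -> R) (j : nat) : R :=
  if j == 0%N then -1 else if j == m.+1 then 1 else c j.

(* A = diag([-1], G_1, ..., G_m, [1]) with G_j = [[c_j, s_j], [-s_j, c_j]]. *)
Definition Amat {R : nzRingType} (p : bool) (m : nat) (q : bool) (c s : nat -> R)
  : 'M[R]_(dimA p m q) :=
  \matrix_(i, j)
    if blk p m i != blk p m j then 0
    else let b := blk p m i in
      if b == 0%N then -1
      else if b == m.+1 then 1
      else if pos2 p i == pos2 p j then c b
      else if pos2 p i == 0%N then s b else - s b.

Definition vnorm {R : rcfType} {n : nat} (v : 'cV[R]_n) : R :=
  Num.sqrt (\sum_i (v i 0) ^+ 2).

Definition normalize {R : rcfType} {n : nat} (v : 'cV[R]_n) : 'cV[R]_n :=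
  (vnorm v)^-1 *: v.

(* Rayleigh quotient x^T A x (for unit vectors). *)
Definition rq {R : nzRingType} {n : nat} (A : 'M[R]_n) (x : 'cV[R]_n) : R :=
  ((x^T *m A *m x) 0 0).

(* The block v^(j) of v is nonzero (this entails that block j is present). *)
Definition block_nz {R : nzRingType} (p : bool) (m : nat) (q : bool)
  (v : 'cV[R]_(dimA p m q)) (j : nat) : Prop :=
  exists i : 'I_(dimA p m q), blk p m i = j /\ v i 0 != 0.

Definition poly_mx_app {R : comNzRingType} {n : nat} (A : 'M[R]_n)
  (P : {poly R}) (v : 'cV[R]_n) : 'cV[R]_n :=
  \sum_(i < size P) P`_i *: iter i (fun x => A *m x) v.

Definition annihilates {R : comNzRingType} {n : nat} (A : 'M[R]_n)
  (v : 'cV[R]_n) (P : {poly R}) : Prop :=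
  poly_mx_app A P v = 0.

Definition is_grade {R : comNzRingType} {n : nat} (A : 'M[R]_n) (v : 'cV[R]_n)
  (d : nat) : Prop :=
  (exists P : {poly R}, P \is monic /\ (size P).-1 = d /\ annihilates A v P) /\
  (forall P : {poly R}, P \is monic -> annihilates A v P -> (d <= (size P).-1)%N).

Section ACI.
Variables (R : rcfType) (n : nat) (A : 'M[R]_n).
Definition aci_w (v : 'cV[R]_n) : 'cV[R]_n := normalize ((A - (rq A v)%:M) *m v).
Definition aci_step (v : 'cV[R]_n) : 'cV[R]_n :=
  let w := aci_w v in normalize ((A^T - (rq A w)%:M) *m w).
Fixpoint aci_v (v0 : 'cV[R]_n) (k : nat) : 'cV[R]_n :=
  match k with O => v0 | S k' => aci_step (aci_v v0 k') end.
Definition aci_alpha (v0 : 'cV[R]_n) (k : nat) : R := rq A (aci_v v0 k).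
Definition aci_beta (v0 : 'cV[R]_n) (k : nat) : R := rq A (aci_w (aci_v v0 k)).
End ACI.

From HB Require Import structures.
From mathcomp Require Import all_boot all_order all_algebra.
From mathcomp Require Import all_classical all_reals all_analysis.
From mathcomp Require Import zify ring lra.
Import Order.TTheory GRing.Theory Num.Theory numFieldNormedType.Exports.
Local Open Scope classical_set_scope.
Local Open Scope ring_scope.

(* Write u_0 = v_0, u_1 = w_0, u_2 = v_1, ... for the interleaved ACI(1) vectors
   and g_t(b) for the squared norm of the block b of u_t.  Both A and A^T act on a
   2x2 block as c_b I plus a skew part (+-s_b J), so for every shift a the block b
   of (M - aI)x (M = A or A^T) has squared norm (1 - 2ac_b + a^2) g(b), and
   x^T A x = sum_b c_b g(b).  Hence, with a_t = u_t^T A u_t,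
     g_{t+1}(b) = wfactor a_t c_b * g_t(b),   wfactor a c = (1 - 2ac + a^2)/(1 - a^2),
   the weights stay a probability vector, and alpha_k = a_{2k}, beta_k = a_{2k+1}.
   The rest is scalar: choose lam in [0,1] with lam c_l + (1 - lam) c_j = 0; the
   inequality ln wfactor a c + c ln((1+a)/(1-a)) >= (1 - c^2) a^2 / 2 (proved with
   the mean value theorem) makes the nonpositive potential
   lam ln g_t(l) + (1 - lam) ln g_t(j) increase by at least kap a_t^2 / 2, kap > 0,
   so sum_t a_t^2 < oo and a_t -> 0. *)

Definition rot_coord (p : bool) (b t : nat) : nat := (p + 2 * b.-1 + t)%N.

Section BlockLayout.
Context {p : bool} {m : nat} {q : bool}.

Lemma blk_le i : (blk p m i <= m.+1)%N.
Proof. by rewrite /blk; case: ifP => // _; case: ifP => // h; lia. Qed.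

Lemma blk_end_uniq i k : (i < dimA p m q)%N -> (k < dimA p m q)%N ->
  blk p m i = blk p m k -> (blk p m i == 0)%N || (blk p m i == m.+1) -> i = k.
Proof.
rewrite /dimA /blk; case: p => /=; last first.
  by case: ifP => h1; case: ifP => h2 //; case: q => /=; lia.
case: eqP => [->|hi]; case: eqP => [->|hk] //=; try by case: ifP.
by case: ifP => h1; case: ifP => h2 //; case: q => /=; lia.
Qed.

Lemma rot_coordE {i b : nat} :
  (1 <= b <= m)%N -> blk p m i = b -> i = rot_coord p b (pos2 p i).
Proof.
rewrite /blk /pos2 /rot_coord; case: p => /=.
- by case: eqP => [->|hi] /=; [lia | case: ifP => h; lia].
- by case: ifP => h; lia.
Qed.

Lemma rot_coord_spec b t : (1 <= b <= m)%N -> (t < 2)%N ->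
  [/\ (rot_coord p b t < dimA p m q)%N, blk p m (rot_coord p b t) = b
    & pos2 p (rot_coord p b t) = t].
Proof.
rewrite /dimA /blk /pos2 /rot_coord => hb ht; split.
- by case: p; case: q => /=; lia.
- by case: p => /=; rewrite ifT; lia.
- by case: p => /=; lia.
Qed.

Lemma pos2_lt i : (pos2 p i < 2)%N.
Proof. by rewrite /pos2 ltn_mod. Qed.

Lemma blk_mid {b : nat} :
  (b < m.+2)%N -> ~~ ((b == 0)%N || (b == m.+1)) -> (1 <= b <= m)%N.
Proof. by move=> h1 h2; apply/andP; split; lia. Qed.

End BlockLayout.

Lemma cext_end {R : nzRingType} {m : nat} (c : nat -> R) {b : nat} :
  (b == 0)%N || (b == m.+1) -> cext m c b ^+ 2 = 1.
Proof. by rewrite /cext; case/orP => /eqP ->; rewrite ?eqxx //= ?sqrrN expr1n. Qed.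

Lemma cext_mid {R : nzRingType} {m : nat} (c : nat -> R) {b : nat} :
  (1 <= b <= m)%N -> cext m c b = c b.
Proof.
by rewrite /cext; case: eqP => [->//|_]; case: eqP => [->|//]; rewrite ltnn andbF.
Qed.

(* One step of the iteration with shift a multiplies the squared norm of a block
   with cosine c by wfactor a c (once the new vector is normalized). *)
Definition wfactor {R : fieldType} (a c : R) : R :=
  (1 - 2 * a * c + a ^+ 2) / (1 - a ^+ 2).

(* Both are block diagonal with the same blocks
   [-1], [1] at the ends; the 2x2 blocks are c_b I + sg s_b J with J the
   rotation by -pi/2, where sg = 1 for A and sg = -1 for A^T.  All the facts the
   iteration needs hold for any matrix of this shape with sg^2 = 1. *)
Section BlockMatrices.
Context {R : realType} {p : bool} {m : nat} {q : bool} {c s : nat -> R}.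
Local Notation n := (dimA p m q).
Local Notation blk := (blk p m).

Definition is_blockmx (M : 'M[R]_n) (sg : R) : Prop :=
 [/\ forall i k : 'I_n, blk i != blk k -> M i k = 0,
     forall i : 'I_n, (blk i == 0)%N || (blk i == m.+1) -> M i i = cext m c (blk i) &
     forall i k : 'I_n, blk i = blk k -> (1 <= blk i <= m)%N ->
        M i k = if pos2 p i == pos2 p k then c (blk i)
                else if pos2 p i == 0%N then sg * s (blk i) else - (sg * s (blk i))].

Lemma blockmx_A : is_blockmx (Amat p m q c s) 1.
Proof.
split=> [i k | i | i k hik /andP[hb1 hb2]]; rewrite mxE.
- by move=> ->.
- by rewrite eqxx /= /cext; case/orP => /eqP ->; rewrite ?eqxx //=; case: ifP.
- rewrite hik eqxx /= -hik ifF; last by apply/eqP => E; rewrite E in hb1.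
  by rewrite ifF ?mul1r //; apply/eqP => E; rewrite E ltnn in hb2.
Qed.

Lemma blockmx_AT : is_blockmx (Amat p m q c s)^T (-1).
Proof.
have [H0 H1 H2] := blockmx_A.
split=> [i k hik | i hi | i k hik hb]; rewrite mxE.
- by rewrite H0 // eq_sym.
- exact: H1.
- rewrite H2 ?hik //; last by rewrite -hik.
  rewrite [pos2 p k == _]eq_sym -hik.
  have := pos2_lt (p:=p) i; have := pos2_lt (p:=p) k.
  by case: (pos2 p i) => [|[|//]]; case: (pos2 p k) => [|[|//]] //= _ _;
    rewrite ?mul1r ?mulN1r ?opprK.
Qed.

Definition bnorm2 (b : nat) (x : 'cV[R]_n) : R :=
  \sum_(i < n | blk i == b) x i 0 ^+ 2.

Lemma bnorm2_ge0 b (x : 'cV[R]_n) : 0 <= bnorm2 b x.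
Proof. by apply: sumr_ge0 => i _; apply: sqr_ge0. Qed.

Lemma bnorm2_scale b (k : R) (x : 'cV[R]_n) : bnorm2 b (k *: x) = k ^+ 2 * bnorm2 b x.
Proof. by rewrite /bnorm2 mulr_sumr; apply: eq_bigr => i _; rewrite mxE exprMn. Qed.

Lemma sum_blocks (F : 'I_n -> R) :
  \sum_(i < n) F i = \sum_(b < m.+2) \sum_(i < n | blk i == b) F i.
Proof.
rewrite (partition_big (fun i : 'I_n => (inord (blk i) : 'I_m.+2)) xpredT) //=.
apply: eq_bigr => b _; apply: eq_bigl => i.
by rewrite -val_eqE /= inordK // ltnS blk_le.
Qed.

Lemma vnorm2_blocks (x : 'cV[R]_n) : vnorm x ^+ 2 = \sum_(b < m.+2) bnorm2 b x.
Proof.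
by rewrite /vnorm sqr_sqrtr -?sum_blocks // sumr_ge0 // => i _; apply: sqr_ge0.
Qed.

Lemma rot_ords {b : nat} : (1 <= b <= m)%N -> exists i0 i1 : 'I_n,
  val i0 = rot_coord p b 0 /\ val i1 = rot_coord p b 1.
Proof.
move=> hb; have [h0 _ _] := rot_coord_spec (p:=p) (q:=q) b 0 hb isT.
have [h1 _ _] := rot_coord_spec (p:=p) (q:=q) b 1 hb isT.
by exists (Ordinal h0), (Ordinal h1).
Qed.

Section Action.
Context {M : 'M[R]_n} {sg : R}.
Hypothesis HM : is_blockmx M sg.

Lemma mulmx_blockE (x : 'cV[R]_n) (i : 'I_n) :
  (M *m x) i 0 = \sum_(k < n | blk k == blk i) M i k * x k 0.
Proof.
case: HM => H0 _ _; rewrite mxE (bigID (fun k : 'I_n => blk k == blk i)) /=.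
by rewrite [X in _ + X]big1 ?addr0 // => k hk; rewrite H0 ?mul0r // eq_sym.
Qed.

Lemma mulmx_end_block (x : 'cV[R]_n) (i : 'I_n) :
  (blk i == 0)%N || (blk i == m.+1) -> (M *m x) i 0 = cext m c (blk i) * x i 0.
Proof.
case: (HM) => _ H1 _ hi; rewrite mulmx_blockE (big_pred1 i) ?H1 // => k /=.
apply/eqP/eqP => [E|->] //; apply/val_inj => /=.
by apply: blk_end_uniq => //; rewrite E.
Qed.

Section RotBlock.
Context {b : nat} {i0 i1 : 'I_n}.
Hypotheses (hb : (1 <= b <= m)%N)
  (e0 : val i0 = rot_coord p b 0) (e1 : val i1 = rot_coord p b 1).

Lemma sum_rot_block (F : 'I_n -> R) : \sum_(k < n | blk k == b) F k = F i0 + F i1.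
Proof.
have [_ b0 _] := rot_coord_spec (p:=p) (q:=q) b 0 hb isT.
have [_ b1 _] := rot_coord_spec (p:=p) (q:=q) b 1 hb isT.
rewrite (bigD1 i0) /=; last by rewrite e0 b0.
rewrite (bigD1 i1) /=; last by rewrite e1 b1 eqxx /= -val_eqE /= e0 e1 eqn_add2l.
rewrite big1 ?addr0 // => k /andP[/andP[/eqP hk hk0] hk1].
have E := rot_coordE hb hk; have := pos2_lt (p:=p) k.
case: (pos2 p k) E => [|[|//]] E _.
- by move: hk0; rewrite -val_eqE /= e0 E eqxx.
- by move: hk1; rewrite -val_eqE /= e1 E eqxx.
Qed.

Lemma mulmx_rot_block (x : 'cV[R]_n) :
  [/\ blk i0 = b, blk i1 = b,
    (M *m x) i0 0 = c b * x i0 0 + sg * s b * x i1 0 &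
    (M *m x) i1 0 = - (sg * s b) * x i0 0 + c b * x i1 0].
Proof.
have [_ b0 p0] := rot_coord_spec (p:=p) (q:=q) b 0 hb isT.
have [_ b1 p1] := rot_coord_spec (p:=p) (q:=q) b 1 hb isT.
case: (HM) => _ _ H2.
have bi0 : blk i0 = b by rewrite e0 b0.
have bi1 : blk i1 = b by rewrite e1 b1.
have pi0 : pos2 p i0 = 0%N by rewrite e0 p0.
have pi1 : pos2 p i1 = 1%N by rewrite e1 p1.
split=> //; rewrite mulmx_blockE ?bi0 ?bi1 sum_rot_block.
- by rewrite (H2 i0 i0) ?bi0 // (H2 i0 i1) ?bi0 ?bi1 // pi0 pi1.
- by rewrite (H2 i1 i0) ?bi0 ?bi1 // (H2 i1 i1) ?bi1 // pi0 pi1 /= mulNr.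
Qed.

End RotBlock.

(* x^(b) . (M x)^(b) = c_b |x^(b)|^2, the rotation part of a block being skew. *)
Lemma block_form (x : 'cV[R]_n) b : (b < m.+2)%N ->
  \sum_(i < n | blk i == b) x i 0 * (M *m x) i 0 = cext m c b * bnorm2 b x.
Proof.
move=> hb; rewrite /bnorm2 mulr_sumr.
have [hb1|hb1] := boolP ((b == 0)%N || (b == m.+1)).
  by apply: eq_bigr => i /eqP hi; rewrite mulmx_end_block ?hi // mulrCA expr2.
have hb2 := blk_mid hb hb1; have [i0 [i1 [e0 e1]]] := rot_ords hb2.
have [_ _ r0 r1] := mulmx_rot_block hb2 e0 e1 x.
by rewrite !(sum_rot_block hb2 e0 e1) r0 r1 cext_mid //; ring.
Qed.

Lemma rq_blocks (x : 'cV[R]_n) : rq M x = \sum_(b < m.+2) cext m c b * bnorm2 b x.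
Proof.
rewrite /rq -mulmxA mxE; under eq_bigr do rewrite mxE.
by rewrite sum_blocks; apply: eq_bigr => b _; apply: block_form.
Qed.

Hypothesis sg2 : sg ^+ 2 = 1.
Hypothesis Hcs : forall b, (1 <= b <= m)%N -> c b ^+ 2 + s b ^+ 2 = 1.

(* Each block of M - aI multiplies norms by the same factor
   |(c_b - a) + i s_b|^2 = 1 - 2 a c_b + a^2. *)
Lemma bnorm2_shift (x : 'cV[R]_n) (a : R) b : (b < m.+2)%N ->
  bnorm2 b ((M - a%:M) *m x) = (1 - 2 * a * cext m c b + a ^+ 2) * bnorm2 b x.
Proof.
have shiftE i : ((M - a%:M) *m x) i 0 = (M *m x) i 0 - a * x i 0.
  by rewrite mulmxBl mul_scalar_mx !mxE.
move=> hb; rewrite /bnorm2 mulr_sumr; under eq_bigr do rewrite shiftE.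
have [hb1|hb1] := boolP ((b == 0)%N || (b == m.+1)).
  apply: eq_bigr => i /eqP hi; rewrite mulmx_end_block ?hi //.
  transitivity ((cext m c b ^+ 2 - 2 * a * cext m c b + a ^+ 2) * x i 0 ^+ 2).
    by ring.
  by rewrite cext_end.
have hb2 := blk_mid hb hb1; have [i0 [i1 [e0 e1]]] := rot_ords hb2.
have [_ _ r0 r1] := mulmx_rot_block hb2 e0 e1 x.
rewrite !(sum_rot_block hb2 e0 e1) r0 r1 cext_mid //.
have csb := Hcs b hb2.
transitivity (((c b - a) ^+ 2 + sg ^+ 2 * s b ^+ 2) * (x i0 0 ^+ 2 + x i1 0 ^+ 2)).
  by ring.
by rewrite sg2 mul1r mulrDr; congr (_ * _ + _ * _); lra.
Qed.

(* The block weights of the normalized next vector, when x is a unit vector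
   and a its Rayleigh quotient, so that |(M - aI) x|^2 = 1 - a^2. *)
Lemma bnorm2_step (x : 'cV[R]_n) (a : R) :
  \sum_(b < m.+2) bnorm2 b x = 1 -> a = \sum_(b < m.+2) cext m c b * bnorm2 b x ->
  forall b, (b < m.+2)%N ->
  bnorm2 b (normalize ((M - a%:M) *m x)) = wfactor a (cext m c b) * bnorm2 b x.
Proof.
move=> h1 ha b hb; set y := (M - a%:M) *m x.
have ny : vnorm y ^+ 2 = 1 - a ^+ 2.
  rewrite vnorm2_blocks.
  transitivity (\sum_(b < m.+2)
      ((1 + a ^+ 2) * bnorm2 b x - (2 * a) * (cext m c b * bnorm2 b x))).
    by apply: eq_bigr => b' _; rewrite bnorm2_shift //; ring.
  by rewrite sumrB -!mulr_sumr h1 -ha; ring.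
by rewrite /normalize bnorm2_scale exprVn ny bnorm2_shift // /wfactor mulrCA mulrA.
Qed.

End Action.
End BlockMatrices.

Arguments is_blockmx {R p m q} c s M sg.

Section LogInequality.
Context {R : realType}.

(* The quadratic 1 - 2ac + a^2 = |c + i s - a|^2 (for c^2 + s^2 = 1) is positive
   when |a| < 1 and c^2 <= 1. *)
Lemma shift_norm_gt0 {c a : R} :
  c ^+ 2 <= 1 -> -1 < a < 1 -> 0 < 1 - 2 * a * c + a ^+ 2.
Proof.
move=> hc /andP[h1 h2]; rewrite ltNge; apply/negP => h.
have h3 : (1 + a ^+ 2) ^+ 2 <= (2 * a * c) ^+ 2 by rewrite ler_sqr ?nnegrE; nra.
have h4 : 0 < (1 - a ^+ 2) ^+ 2 by apply: exprn_gt0; nra.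
nra.
Qed.

Lemma wfactor_gt0 {c a : R} : c ^+ 2 <= 1 -> -1 < a < 1 -> 0 < wfactor a c.
Proof.
move=> hc ha; apply: divr_gt0; first exact: shift_norm_gt0.
by case/andP: ha => h1 h2; nra.
Qed.

Lemma ge0_of_deriv_sign (f df : R -> R) (lo hi : R) : lo < 0 < hi -> f 0 = 0 ->
  (forall x, lo < x < hi -> is_derive x 1 f (df x)) ->
  (forall x, lo < x < hi -> 0 <= x * df x) ->
  forall a, lo < a < hi -> 0 <= f a.
Proof.
move=> /andP[hlo hhi] f0 der sgn a /andP[ha1 ha2].
have mvt u v : lo < u -> u < v -> v < hi ->
    exists2 xi, u < xi < v & f v - f u = df xi * (v - u).
  move=> hu huv hv.
  have derin x : x \in `]u, v[ -> is_derive x 1 f (df x).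
    by rewrite in_itv /= => /andP[h1 h2]; apply: der; apply/andP; split; lra.
  have cont : {within `[u, v], continuous f}.
    apply: (derivable_within_continuous (i := `[u, v])) => x.
    rewrite in_itv /= => /andP[h1 h2].
    by apply: (@ex_derive _ _ _ _ _ _ (df x)); apply: der; apply/andP; split; lra.
  have [xi] := MVT huv derin cont.
  by rewrite in_itv /=; exists xi.
have [ha|ha|<-] := ltgtP 0 a; last by rewrite f0.
- have [xi /andP[h1 h2]] := mvt 0 a hlo ha ha2; rewrite f0 subr0 => ->.
  have : 0 <= xi * df xi by apply: sgn; apply/andP; split; lra.
  rewrite pmulr_rge0; last lra.
  by move=> hd; apply: mulr_ge0 => //; lra.
- have [xi /andP[h1 h2]] := mvt a 0 ha1 ha hhi; rewrite f0 sub0r => E.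
  have : 0 <= xi * df xi by apply: sgn; apply/andP; split; lra.
  rewrite nmulr_rge0; last lra.
  move=> hd.
  have : - f a <= 0 by rewrite E; apply: mulr_le0_ge0 => //; lra.
  by rewrite oppr_le0.
Qed.

Lemma is_derive_ln_horner (P : {poly R}) (x : R) : 0 < P.[x] ->
  is_derive x 1 (fun a => ln P.[a]) ((deriv P).[x] / P.[x]).
Proof.
move=> Px; rewrite mulrC.
exact: is_derive1_comp (is_derive1_ln Px) (is_derive_poly P x).
Qed.

Definition log_gap (c a : R) : R :=
  ln (1 - 2 * a * c + a ^+ 2) - ln (1 - a ^+ 2) + c * (ln (1 + a) - ln (1 - a))
  - (1 - c ^+ 2) / 2 * a ^+ 2.

Definition log_gap' (c x : R) : R :=
  (2 * x - 2 * c) / (1 - 2 * x * c + x ^+ 2) + 2 * x / (1 - x ^+ 2)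
  + c * (1 / (1 + x) + 1 / (1 - x)) - (1 - c ^+ 2) * x.

Lemma log_gap_deriv {c x : R} : c ^+ 2 <= 1 -> -1 < x < 1 ->
  is_derive x 1 (log_gap c) (log_gap' c x).
Proof.
move=> hc hx; have hQ := shift_norm_gt0 hc hx; case/andP: hx => h1 h2.
pose Q : {poly R} := 1 - (2 * c) *: 'X + 'X^2.
have -> : log_gap c = fun a => ln Q.[a] - ln (1 - 'X^2).[a]
    + c * (ln (1 + 'X).[a] - ln (1 - 'X).[a]) - (1 - c ^+ 2) / 2 * ('X^2).[a].
  by apply/funext => a; rewrite /log_gap !hornerE [2 * c * a]mulrAC.
have dQ := @is_derive_ln_horner Q x ltac:(by rewrite !hornerE [2 * c * x]mulrAC).
have d2 := @is_derive_ln_horner (1 - 'X^2) x ltac:(rewrite !hornerE; nra).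
have d3 := @is_derive_ln_horner (1 + 'X) x ltac:(rewrite !hornerE; lra).
have d4 := @is_derive_ln_horner (1 - 'X) x ltac:(rewrite !hornerE; lra).
(* With these derivatives of the logarithms in context, instance search
   assembles the derivative of the whole sum; it remains to simplify it. *)
apply: is_derive_eq; rewrite -![_ *: _]/(_ * _) /log_gap' !poly.derivE !hornerE.
rewrite -[X in X / (1 - 2 * c * x + x ^+ 2)]/(- (2 * c) + x + x).
by field; apply/and4P; split; apply/negP => /eqP H; nra.
Qed.

Lemma log_gap'_sign {c x : R} :
  c ^+ 2 <= 1 -> -1 < x < 1 -> 0 <= x * log_gap' c x.
Proof.
move=> hc hx; have hQ := shift_norm_gt0 hc hx; case/andP: hx => h1 h2.
have -> : x * log_gap' c x = x ^+ 2 * (1 - c ^+ 2)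
    * (4 - (1 - 2 * x * c + x ^+ 2) * (1 - x ^+ 2))
    / ((1 - 2 * x * c + x ^+ 2) * (1 - x ^+ 2)).
  by rewrite /log_gap'; field; apply/and4P; split; apply/negP => /eqP H; nra.
have hP : 0 < 1 - x ^+ 2 by nra.
apply: divr_ge0; last exact/ltW/mulr_gt0.
apply: mulr_ge0; first nra.
have : 1 - 2 * x * c + x ^+ 2 <= 4 by nra.
nra.
Qed.

Lemma log_ineq {c a : R} : c ^+ 2 <= 1 -> -1 < a < 1 ->
  (1 - c ^+ 2) / 2 * a ^+ 2 <=
  ln (1 - 2 * a * c + a ^+ 2) - ln (1 - a ^+ 2) + c * (ln (1 + a) - ln (1 - a)).
Proof.
move=> hc ha; rewrite -subr_ge0.
apply: (@ge0_of_deriv_sign (log_gap c) (log_gap' c) (-1) 1) => //.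
- by rewrite oppr_lt0 ltr01.
- by rewrite /log_gap !(expr0n, mulr0, mul0r, subr0, addr0) subrr mulr0 addr0.
- by move=> x hx; apply: log_gap_deriv.
- by move=> x hx; apply: log_gap'_sign.
Qed.

Lemma ln_wfactor_ge {c a : R} : c ^+ 2 <= 1 -> -1 < a < 1 ->
  (1 - c ^+ 2) / 2 * a ^+ 2 - c * (ln (1 + a) - ln (1 - a)) <= ln (wfactor a c).
Proof.
move=> hc ha; have hQ := shift_norm_gt0 hc ha; have := log_ineq hc ha.
have hP : 0 < 1 - a ^+ 2 by case/andP: ha => h1 h2; nra.
by rewrite /wfactor ln_div ?posrE //; lra.
Qed.

End LogInequality.

Section Sequences.
Context {R : realType}.

Lemma cvg0_of_bounded_sq_sums (a : nat -> R) (K : R) :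
  (forall t, \sum_(0 <= s < t) a s ^+ 2 <= K) -> a @ \oo --> 0.
Proof.
move=> H; have sq0 : (fun s => a s ^+ 2) @ \oo --> 0.
  apply: cvg_series_cvg_0; apply: nondecreasing_is_cvgn.
    apply/nondecreasing_seqP => t.
    by rewrite /series /= big_nat_recr //= lerDl sqr_ge0.
  by exists K => _ [t _ <-]; apply: H.
apply/cvgr0Pnorm_lt => e he.
move/cvgr0Pnorm_lt: sq0 => /(_ (e ^+ 2) (exprn_gt0 2 he)); apply: filterS => t.
rewrite ger0_norm ?sqr_ge0 // => h.
have hn : `|a t| ^+ 2 = a t ^+ 2 by rewrite -normrX ger0_norm ?sqr_ge0.
have := normr_ge0 (a t); nra.
Qed.

Lemma cvg0_subseq {a : nat -> R} {f : nat -> nat} :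
  (forall k, (k <= f k)%N) -> a @ \oo --> 0 -> (fun k => a (f k)) @ \oo --> 0.
Proof.
move=> hf /cvgr0Pnorm_lt H; apply/cvgr0Pnorm_lt => e he.
have [N _ HN] := H e he; exists N => // k /= hk.
exact/HN/(leq_trans hk).
Qed.

End Sequences.

Section WeightDynamics.
Context {R : realType}.

Lemma balance {cl cj : R} : cl ^+ 2 < 1 -> cj ^+ 2 <= 1 -> cl * cj <= 0 ->
  exists lam : R, [/\ 0 <= lam <= 1, lam * cl + (1 - lam) * cj = 0 &
     0 < lam * (1 - cl ^+ 2) + (1 - lam) * (1 - cj ^+ 2)].
Proof.
move=> hl hj hlj; have [->|cj0] := eqVneq cj 0.
  by exists 0; split; [rewrite lexx ler01 | lra | nra].
have hcj : 0 < cj ^+ 2 by rewrite exprn_even_gt0.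
have hsq : 0 < (cj - cl) ^+ 2 by nra.
pose lam := cj / (cj - cl).
have hlam : lam * (cj - cl) = cj by rewrite /lam divfK // -sqrf_eq0 gt_eqF.
have e2 : lam * (cj - cl) ^+ 2 = cj ^+ 2 - cl * cj by rewrite expr2 mulrA hlam; ring.
have lam_gt0 : 0 < lam.
  by rewrite -(pmulr_lgt0 _ hsq) e2; lra.
have lam_le1 : 0 <= 1 - lam.
  by rewrite -(pmulr_lge0 _ hsq) mulrBl mul1r e2; nra.
exists lam; split.
- by apply/andP; split; lra.
- have -> : lam * cl + (1 - lam) * cj = cj - lam * (cj - cl) by ring.
  by rewrite hlam subrr.
- have hl' : 0 < lam * (1 - cl ^+ 2) by apply: mulr_gt0; lra.
  have hj' : 0 <= (1 - lam) * (1 - cj ^+ 2) by apply: mulr_ge0; lra.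
  lra.
Qed.

Lemma wmean_in_unit {N : nat} {cb g : nat -> R} {l : nat} :
  (forall b, (b < N)%N -> cb b ^+ 2 <= 1) -> (forall b, (b < N)%N -> 0 <= g b) ->
  \sum_(b < N) g b = 1 -> (l < N)%N -> 0 < g l -> cb l ^+ 2 < 1 ->
  -1 < \sum_(b < N) cb b * g b < 1.
Proof.
move=> Hc Hg0 h1 hl gl cl.
have E1 : 1 - \sum_(b < N) cb b * g b = \sum_(b < N) (1 - cb b) * g b.
  by rewrite -{1}h1 -sumrB; apply: eq_bigr => b _; ring.
have E2 : 1 + \sum_(b < N) cb b * g b = \sum_(b < N) (1 + cb b) * g b.
  by rewrite -{1}h1 -big_split; apply: eq_bigr => b _ /=; ring.
have P1 : (1 - cb l) * g l <= \sum_(b < N) (1 - cb b) * g b.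
  rewrite (bigD1 (Ordinal hl)) //= lerDl; apply: sumr_ge0 => b _.
  by apply: mulr_ge0; [have := Hc b (ltn_ord b); nra | exact: Hg0].
have P2 : (1 + cb l) * g l <= \sum_(b < N) (1 + cb b) * g b.
  rewrite (bigD1 (Ordinal hl)) //= lerDl; apply: sumr_ge0 => b _.
  by apply: mulr_ge0; [have := Hc b (ltn_ord b); nra | exact: Hg0].
have Q1 : 0 < (1 - cb l) * g l by apply: mulr_gt0; nra.
have Q2 : 0 < (1 + cb l) * g l by apply: mulr_gt0; nra.
by apply/andP; split; lra.
Qed.

Lemma wfactor_mass {N : nat} {cb g : nat -> R} {a : R} :
  \sum_(b < N) g b = 1 -> a = \sum_(b < N) cb b * g b -> -1 < a < 1 ->
  \sum_(b < N) wfactor a (cb b) * g b = 1.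
Proof.
move=> h1 ha /andP[ha1 ha2].
have hP : 1 - a ^+ 2 != 0 by apply/eqP => E; nra.
transitivity ((1 - a ^+ 2)^-1
    * \sum_(b < N) ((1 + a ^+ 2) * g b - (2 * a) * (cb b * g b))).
  by rewrite mulr_sumr; apply: eq_bigr => b _; rewrite /wfactor; field.
by rewrite sumrB -!mulr_sumr h1 -ha; field.
Qed.

(* Abstract form of the iteration: nonnegative weights g t b on the blocks
   b < N, rescaled at each step by wfactor (a t) (cb b), where a t is their
   mean; this holds as long as the weights are normalized. *)
Section Dynamics.
Context {N : nat} {cb : nat -> R} {g : nat -> nat -> R} {a : nat -> R} {l : nat}.
Hypothesis Hcb : forall b, (b < N)%N -> cb b ^+ 2 <= 1.
Hypothesis Hg0 : forall t b, (b < N)%N -> 0 <= g t b.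
Hypothesis Ha : forall t, a t = \sum_(b < N) cb b * g t b.
Hypothesis Hmass : \sum_(b < N) g 0%N b = 1.
Hypothesis Hstep : forall t, \sum_(b < N) g t b = 1 ->
  forall b, (b < N)%N -> g t.+1 b = wfactor (a t) (cb b) * g t b.
Hypotheses (Hl : (l < N)%N) (cl : cb l ^+ 2 < 1) (gl : 0 < g 0%N l).

Lemma weights_invariant t : \sum_(b < N) g t b = 1 /\ 0 < g t l.
Proof.
elim: t => [|t [mass pos]]; first by [].
have ha : -1 < a t < 1.
  by rewrite Ha; exact: wmean_in_unit Hcb (Hg0 t) mass Hl pos cl.
split.
  by rewrite -(wfactor_mass mass (Ha t) ha); apply: eq_bigr => b _; apply: Hstep.
by rewrite Hstep //; apply: mulr_gt0 => //; apply: wfactor_gt0 => //; apply: Hcb.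
Qed.

Lemma shift_in_unit t : -1 < a t < 1.
Proof.
have [mass pos] := weights_invariant t.
by rewrite Ha; exact: wmean_in_unit Hcb (Hg0 t) mass Hl pos cl.
Qed.

Lemma weight_rec t b : (b < N)%N -> g t.+1 b = wfactor (a t) (cb b) * g t b.
Proof. by apply: Hstep; case: (weights_invariant t). Qed.

Lemma weight_pos {b : nat} : (b < N)%N -> 0 < g 0%N b -> forall t, 0 < g t b.
Proof.
move=> hb h0; elim=> [//|t IH]; rewrite weight_rec //.
by apply: mulr_gt0 => //; apply: wfactor_gt0 (Hcb _ hb) (shift_in_unit t).
Qed.

Lemma weight_le1 t b : (b < N)%N -> g t b <= 1.
Proof.
move=> hb; rewrite -(weights_invariant t).1 (bigD1 (Ordinal hb)) //= lerDl.
by apply: sumr_ge0 => i _; apply: Hg0.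
Qed.

Lemma ln_weight_rec t {b : nat} : (b < N)%N -> 0 < g 0%N b ->
  ln (g t.+1 b) = ln (g t b) + ln (wfactor (a t) (cb b)).
Proof.
move=> hb h0; have hw := wfactor_gt0 (Hcb _ hb) (shift_in_unit t).
have hg := weight_pos hb h0 t.
by rewrite weight_rec // lnM ?posrE // addrC.
Qed.

(* The potential L t = lam ln g_t(l) + (1 - lam) ln g_t(j), where
   lam c_l + (1 - lam) c_j = 0, is nonpositive and, by [ln_wfactor_ge], grows
   by at least kap/2 a_t^2 at each step: hence sum_t a_t^2 < oo and a_t -> 0. *)
Theorem shift_cvg0 {j : nat} : (j < N)%N -> 0 < g 0%N j -> cb l * cb j <= 0 ->
  a @ \oo --> 0.
Proof.
move=> Hj gj clj.
have [lam [/andP[lam0 lam1] lamc kap0]] := balance cl (Hcb _ Hj) clj.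
set kap := _ + _ in kap0.
have lam1' : 0 <= 1 - lam by rewrite subr_ge0.
pose L t := lam * ln (g t l) + (1 - lam) * ln (g t j).
have step t : L t + kap / 2 * a t ^+ 2 <= L t.+1.
  rewrite /L (ln_weight_rec t Hl gl) (ln_weight_rec t Hj gj).
  have Fl := ln_wfactor_ge (Hcb _ Hl) (shift_in_unit t).
  have Fj := ln_wfactor_ge (Hcb _ Hj) (shift_in_unit t).
  set X := ln (1 + a t) - ln (1 - a t) in Fl Fj.
  have E : lam * cb l * X + (1 - lam) * cb j * X = 0 by rewrite -mulrDl lamc mul0r.
  have := ler_wpM2l lam0 Fl; have := ler_wpM2l lam1' Fj.
  rewrite /kap; lra.
have L_le0 t : L t <= 0.
  have := mulr_ge0_le0 lam0 (ln_le0 (weight_le1 t l Hl)).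
  by have := mulr_ge0_le0 lam1' (ln_le0 (weight_le1 t j Hj)); rewrite /L; lra.
have sums t : L 0%N + kap / 2 * \sum_(0 <= s < t) a s ^+ 2 <= L t.
  elim: t => [|t IH]; first by rewrite big_geq // mulr0 addr0.
  by rewrite big_nat_recr //= mulrDr addrA; have := step t; lra.
apply: (@cvg0_of_bounded_sq_sums _ a (- L 0%N / (kap / 2))) => t.
rewrite ler_pdivlMr; last lra.
by have := sums t; have := L_le0 t; rewrite mulrC; lra.
Qed.

End Dynamics.

End WeightDynamics.

(* The ACI(1) vectors interleaved into one sequence:
   u_{2k} = v_k and u_{2k+1} = w_k. *)
Definition aci_u {R : rcfType} {n : nat} (A : 'M[R]_n) (v0 : 'cV[R]_n) (t : nat)
  : 'cV[R]_n :=
  if odd t then aci_w A (aci_v A v0 t./2) else aci_v A v0 t./2.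

Section Interleaving.
Context {R : rcfType} {n : nat} (A : 'M[R]_n) (v0 : 'cV[R]_n).
Local Notation u := (aci_u A v0).

Lemma aci_u_step t :
  u t.+1 = normalize (((if odd t then A^T else A) - (rq A (u t))%:M) *m u t).
Proof.
rewrite /aci_u /=; case: (boolP (odd t)) => ht /=.
  by rewrite uphalf_half ht /= add0n /aci_step.
by rewrite uphalf_half (negbTE ht).
Qed.

Lemma aci_alphaE k : aci_alpha A v0 k = rq A (u k.*2).
Proof. by rewrite /aci_u odd_double doubleK. Qed.

Lemma aci_betaE k : aci_beta A v0 k = rq A (u k.*2.+1).
Proof. by rewrite /aci_u /= odd_double /= uphalf_double. Qed.

End Interleaving.

Section BlockWeights.
Context {R : realType} {p : bool} {m : nat} {q : bool} {c s : nat -> R}.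
Hypothesis Hcs : forall b, (1 <= b <= m)%N -> c b ^+ 2 + s b ^+ 2 = 1.
Local Notation A := (Amat p m q c s).

Lemma cext_sq_le1 b : (b < m.+2)%N -> cext m c b ^+ 2 <= 1.
Proof.
move=> hb; have [hb1|hb1] := boolP ((b == 0)%N || (b == m.+1)).
  by rewrite cext_end.
have hb2 := blk_mid hb hb1; rewrite cext_mid //.
by have := Hcs b hb2; have := sqr_ge0 (s b); lra.
Qed.

Lemma cext_sq_lt1 {b : nat} : (1 <= b <= m)%N -> s b != 0 -> cext m c b ^+ 2 < 1.
Proof.
move=> hb hs; rewrite cext_mid //; have := Hcs b hb.
have hs2 : 0 < s b ^+ 2 by rewrite exprn_even_gt0.
lra.
Qed.

Lemma bnorm2_gt0 (x : 'cV[R]_(dimA p m q)) b : block_nz x b -> 0 < bnorm2 b x.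
Proof.
case=> i [hi hnz]; rewrite /bnorm2 (bigD1 i) /=; last by rewrite hi.
apply: (@lt_le_trans _ _ (x i 0 ^+ 2)); first by rewrite exprn_even_gt0.
by rewrite lerDl; apply: sumr_ge0 => k _; apply: sqr_ge0.
Qed.

Lemma aci_bnorm2_step (v0 : 'cV[R]_(dimA p m q)) t :
  let u := aci_u A v0 in
  \sum_(b < m.+2) bnorm2 b (u t) = 1 -> forall b, (b < m.+2)%N ->
  bnorm2 b (u t.+1) = wfactor (rq A (u t)) (cext m c b) * bnorm2 b (u t).
Proof.
move=> u mass b hb; rewrite /u aci_u_step -/u.
have ha := rq_blocks blockmx_A (u t).
case: (odd t).
- by apply: (bnorm2_step blockmx_AT _ Hcs) => //; rewrite sqrrN expr1n.
- by apply: (bnorm2_step blockmx_A _ Hcs) => //; rewrite expr1n.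
Qed.

End BlockWeights.

Theorem lemma4p9 (R : realType) (m : nat) (p q : bool) (c s : nat -> R)
  (v0 : 'cV[R]_(dimA p m q)) :
  (1 <= m)%N ->
  (forall j, (1 <= j <= m)%N -> c j ^+ 2 + s j ^+ 2 = 1) ->
  (forall j, (1 <= j <= m)%N -> s j != 0) ->
  (forall j, (j <= m)%N -> cext m c j < cext m c j.+1) ->
  vnorm v0 = 1 ->
  (exists d, is_grade (Amat p m q c s) v0 d /\ (2 <= d)%N) ->
  (exists l, [/\ (1 <= l <= m)%N, block_nz v0 l &
     exists j, [/\ (j <= m.+1)%N, block_nz v0 j & cext m c l * cext m c j <= 0]]) ->
  ((fun k => aci_alpha (Amat p m q c s) v0 k) @ \oo --> (0:R)) /\
  ((fun k => aci_beta (Amat p m q c s) v0 k) @ \oo --> (0:R)).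
Proof.
move=> _ Hcs Hs _ hv _ [l [hl nzl [j [hj nzj hlj]]]].
set A := Amat p m q c s; set u := aci_u A v0.
have mass0 : \sum_(b < m.+2) bnorm2 b (u 0%N) = 1 by rewrite -vnorm2_blocks hv expr1n.
have hl' : (l < m.+2)%N by case/andP: hl => _ /leqW.
have cvg_shift : (fun t => rq A (u t)) @ \oo --> 0.
  apply: (shift_cvg0 (N := m.+2) (cb := cext m c)
    (g := fun t b => bnorm2 b (u t)) (l := l)).
  - exact: cext_sq_le1 Hcs.
  - by move=> t b _; apply: bnorm2_ge0.
  - by move=> t; apply: (rq_blocks (@blockmx_A R p m q c s)).
  - exact: mass0.
  - exact: aci_bnorm2_step Hcs v0.
  - exact: hl'.
  - by apply: (cext_sq_lt1 Hcs hl); apply: Hs.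
  - exact: bnorm2_gt0 nzl.
  - exact: hj.
  - exact: bnorm2_gt0 nzj.
  - exact: hlj.
split.
- under eq_fun do rewrite aci_alphaE.
  by apply: (cvg0_subseq _ cvg_shift) => k; rewrite -addnn leq_addr.
- under eq_fun do rewrite aci_betaE.
  by apply: (cvg0_subseq _ cvg_shift) => k; rewrite -addnn leqW // leq_addr.
Qed.
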